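(* Consider the mining game with $N\ge 2$ miners, costs-per-hash $0<c_1\le c_2\le\dots\le c_N$, reward $R>0$ and capacity parameter $\gamma\ge 0$. There exists a unique equilibrium hash rate profile $h^*$. Moreover, there is an integer $n$ with $2\le n\le N$ such that $$h_i^*=\begin{cases}\dfrac{H^*(R-c_iH^* )}{R+\gamma (H^* )^2}, & 1\le i\le n,\\[2mm] 0, & n<i\le N,\end{cases}$$ and the equilibrium aggregate hash rate $H^*=\sum_{j=1}^N h_j^*$ is $$H^*=\begin{cases}\dfrac{\sqrt{(c^{(n)})^2+4(n-1)R\gamma}-c^{(n)}}{2\gamma}, & \gamma>0,\\[2mm] \dfrac{(n-1)R}{c^{(n)}}, & \gamma=0,\end{cases}$$ where $c^{(n)}=\sum_{i=1}^n c_i$.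
   Context: Mining game: there are $N\ge2$ miners, indexed so that their costs-per-hash satisfy $0<c_1\le\dots\le c_N$ (in the paper these are the costs $c_i=c_i(\beta_i)$ resulting from an arbitrary fixed hardware-investment profile $\beta\in[0,1]^N$). Each miner $i$ chooses a hash rate $h_i\ge 0$, and $H=\sum_{j=1}^N h_j$. The payoff of miner $i$ is $\pi_i(h_i;h_{-i})=\frac{h_i}{H}R-c_ih_i-\frac{\gamma}{2}h_i^2$ if $H>0$ and $\pi_i=0$ if $H=0$. An equilibrium hash rate profile is a vector $h^*\in[0,\infty)^N$ such that $\pi_i(h_i^*;h_{-i}^* )=\sup_{h_i\ge0}\pi_i(h_i;h_{-i}^* )$ for every $i$. *)

(* concrete real numbers R. Miners are indexed 0..N-1
   (miner i of the paper is index i-1 here). *)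
From Stdlib Require Import Reals Lra Lia.
Open Scope R_scope.

Fixpoint sumN (f : nat -> R) (n : nat) : R :=
  match n with
  | O => 0
  | S m => sumN f m + f m
  end.

Definition payoff (N : nat) (Rw gamma : R) (c : nat -> R) (h : nat -> R)
    (i : nat) (x : R) : R :=
  let H := x + sumN (fun j => if Nat.eq_dec j i then 0 else h j) N in
  if Req_EM_T H 0 then 0
  else x / H * Rw - c i * x - gamma / 2 * x ^ 2.

Definition is_equilibrium (N : nat) (Rw gamma : R) (c : nat -> R)
    (h : nat -> R) : Prop :=
  (forall i, (i < N)%nat -> 0 <= h i) /\
  (forall i, (i < N)%nat -> forall x, 0 <= x ->
      payoff N Rw gamma c h i x <= payoff N Rw gamma c h i (h i)).

From Stdlib Require Import Reals Lra Lia.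
Open Scope R_scope.

(* A miner facing a positive aggregate S of the others has the strictly concave
   profit x/(x+S) R - c x - gamma x^2/2 on [0,oo), so its best responses are its
   KKT points; with T = x + S these are exactly x = T * max(0, (R - cT)/(R + gamma T^2)).
   A miner facing S = 0 has no best response at all (the payoff is 0 at total 0),
   so a profile is an equilibrium iff its total H is positive and each h_i is H
   times this share at H.  The shares then sum to 1, and their sum is strictly
   decreasing in H where positive, which gives uniqueness.  For existence, take
   the largest n such that miner n is still profitable at the positive root H_n of
   gamma H^2 + c^(n) H = (n-1) R: adding a profitable miner raises the root without
   making that miner unprofitable, so miners beyond n are inactive at H_n. *)

Lemma sumN_ext f g n : (forall i, (i < n)%nat -> f i = g i) -> sumN f n = sumN g n.
Proof.
  induction n as [|n IH]; intros Hfg; simpl; [reflexivity|].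
  rewrite IH by (intros; apply Hfg; lia). rewrite Hfg by lia. reflexivity.
Qed.

Lemma sumN_le f g n : (forall i, (i < n)%nat -> f i <= g i) -> sumN f n <= sumN g n.
Proof.
  induction n as [|n IH]; intros Hfg; simpl; [lra|].
  assert (f n <= g n) by (apply Hfg; lia).
  assert (sumN f n <= sumN g n) by (apply IH; intros; apply Hfg; lia).
  lra.
Qed.

Lemma sumN_zero n : sumN (fun _ => 0) n = 0.
Proof. induction n as [|n IH]; simpl; [reflexivity|]. rewrite IH. ring. Qed.

Lemma sumN_nonneg f n : (forall i, (i < n)%nat -> 0 <= f i) -> 0 <= sumN f n.
Proof. intros Hf. rewrite <- (sumN_zero n). now apply sumN_le. Qed.

Lemma sumN_lt f g n j : (forall i, (i < n)%nat -> f i <= g i) ->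
  (j < n)%nat -> f j < g j -> sumN f n < sumN g n.
Proof.
  induction n as [|n IH]; intros Hfg Hj Hlt; [lia|]. simpl.
  assert (f n <= g n) by (apply Hfg; lia).
  destruct (Nat.eq_dec j n) as [->|Hjn].
  - assert (sumN f n <= sumN g n) by (apply sumN_le; intros; apply Hfg; lia). lra.
  - assert (sumN f n < sumN g n) by (apply IH; [intros; apply Hfg| |]; auto; lia). lra.
Qed.

Lemma sumN_pos_witness f n : 0 < sumN f n -> exists j, (j < n)%nat /\ 0 < f j.
Proof.
  induction n as [|n IH]; simpl; intros Hpos; [lra|].
  destruct (Rlt_dec 0 (f n)) as [Hfn|Hfn].
  - exists n. split; [lia|assumption].
  - destruct IH as [j [Hj Hfj]]; [lra|]. exists j. split; [lia|assumption].
Qed.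

Lemma sumN_affine a b f n : sumN (fun i => a + b * f i) n = INR n * a + b * sumN f n.
Proof. induction n as [|n IH]; simpl sumN; [simpl; ring|]. rewrite IH, S_INR. ring. Qed.

Lemma sumN_scal_l a f n : sumN (fun i => a * f i) n = a * sumN f n.
Proof.
  rewrite (sumN_ext _ (fun i => 0 + a * f i)) by (intros; ring).
  rewrite sumN_affine. ring.
Qed.

Lemma sumN_except f n i : (i < n)%nat ->
  sumN (fun j => if Nat.eq_dec j i then 0 else f j) n = sumN f n - f i.
Proof.
  induction n as [|n IH]; intros Hi; [lia|]. simpl.
  destruct (Nat.eq_dec n i) as [->|Hni].
  - rewrite (sumN_ext _ f); [ring|].
    intros j Hj. destruct (Nat.eq_dec j i); [lia|reflexivity].
  - rewrite IH by lia. ring.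
Qed.

Lemma sumN_zero_tail f n N : (n <= N)%nat ->
  (forall i, (n <= i)%nat -> (i < N)%nat -> f i = 0) -> sumN f N = sumN f n.
Proof.
  induction N as [|N IH]; intros HnN Hz.
  - now replace n with 0%nat by lia.
  - destruct (Nat.eq_dec n (S N)) as [->|Hn]; [reflexivity|]. simpl.
    rewrite Hz, IH by (try intros; try apply Hz; lia). ring.
Qed.

Definition profit (Rw gamma ci S x : R) : R :=
  if Req_EM_T (x + S) 0 then 0 else x / (x + S) * Rw - ci * x - gamma / 2 * x ^ 2.

Definition marginal_profit (Rw gamma ci S x : R) : R :=
  Rw * S / (x + S) ^ 2 - ci - gamma * x.

Definition share (Rw gamma ci T : R) : R :=
  Rmax 0 ((Rw - ci * T) / (Rw + gamma * T ^ 2)).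

Lemma payoff_eq_profit N Rw gamma c h i x : (i < N)%nat ->
  payoff N Rw gamma c h i x = profit Rw gamma (c i) (sumN h N - h i) x.
Proof. intros Hi. unfold payoff, profit. now rewrite sumN_except. Qed.

Lemma eq_Rmax0_iff x y : 0 <= x -> x = Rmax 0 y <-> y <= x /\ x * (y - x) = 0.
Proof.
  intros Hx. unfold Rmax. destruct (Rle_dec 0 y); split.
  - intros ->. split; [lra|ring].
  - intros [Hyx Hxy]. destruct (Rmult_integral _ _ Hxy); lra.
  - intros ->. split; [lra|ring].
  - intros [Hyx Hxy]. destruct (Rmult_integral _ _ Hxy); lra.
Qed.

Section BestResponse.

Variables Rw gamma ci S : R.
Hypotheses (HRw : 0 < Rw) (Hgamma : 0 <= gamma) (HS : 0 < S).

Lemma profit_eq x : 0 <= x -> profit Rw gamma ci S x = x / (x + S) * Rw - ci * x - gamma / 2 * x ^ 2.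
Proof. intros Hx. unfold profit. destruct (Req_EM_T (x + S) 0); [lra|reflexivity]. Qed.

(* The expansion at xs is exact, with quadratic coefficient
   Rw S / ((xs+S)^2 (x+S)) + gamma/2, which lies in [0, Rw/(xs+S)^2 + gamma/2]. *)
Lemma profit_gap_bounds x xs : 0 <= x -> 0 <= xs ->
  - marginal_profit Rw gamma ci S xs * (x - xs)
    <= profit Rw gamma ci S xs - profit Rw gamma ci S x
    <= (x - xs) ^ 2 * (Rw / (xs + S) ^ 2 + gamma / 2)
       - marginal_profit Rw gamma ci S xs * (x - xs).
Proof.
  intros Hx Hxs. rewrite !profit_eq by assumption. unfold marginal_profit.
  assert (Hgap : xs / (xs + S) * Rw - ci * xs - gamma / 2 * xs ^ 2
                 - (x / (x + S) * Rw - ci * x - gamma / 2 * x ^ 2)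
               = (x - xs) ^ 2 * ((Rw / (xs + S) ^ 2) * (S / (x + S)) + gamma / 2)
                 - (Rw * S / (xs + S) ^ 2 - ci - gamma * xs) * (x - xs))
    by (field; lra).
  rewrite Hgap.
  assert (0 < Rw / (xs + S) ^ 2) by (apply Rdiv_lt_0_compat; nra).
  assert (0 <= S / (x + S) <= 1).
  { split; [apply Rlt_le, Rdiv_lt_0_compat; lra|].
    apply (Rmult_le_reg_r (x + S)); [lra|]. field_simplify; lra. }
  assert (0 <= (x - xs) ^ 2) by apply pow2_ge_0.
  set (A := Rw / (xs + S) ^ 2) in *. set (B := S / (x + S)) in *.
  assert (0 <= A * B <= A) by (split; nra).
  assert (0 <= (x - xs) ^ 2 * (A * B + gamma / 2)) by (apply Rmult_le_pos; lra).
  assert ((x - xs) ^ 2 * (A * B + gamma / 2) <= (x - xs) ^ 2 * (A + gamma / 2))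
    by (apply Rmult_le_compat_l; lra).
  split; lra.
Qed.

Lemma best_response_of_kkt xs : 0 <= xs ->
  marginal_profit Rw gamma ci S xs <= 0 -> xs * marginal_profit Rw gamma ci S xs = 0 ->
  forall x, 0 <= x -> profit Rw gamma ci S x <= profit Rw gamma ci S xs.
Proof.
  intros Hxs Hg Hcs x Hx.
  pose proof (profit_gap_bounds x xs Hx Hxs) as [Hlow _]. nra.
Qed.

Lemma kkt_of_best_response xs : 0 <= xs ->
  (forall x, 0 <= x -> profit Rw gamma ci S x <= profit Rw gamma ci S xs) ->
  marginal_profit Rw gamma ci S xs <= 0 /\ xs * marginal_profit Rw gamma ci S xs = 0.
Proof.
  intros Hxs Hbr.
  set (g := marginal_profit Rw gamma ci S xs).
  set (M := Rw / (xs + S) ^ 2 + gamma / 2).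
  assert (HM : 0 < M) by (assert (0 < Rw / (xs + S) ^ 2) by (apply Rdiv_lt_0_compat; nra);
                          unfold M; lra).
  (* A step of size s*g with s <= 1/(2M) gains at least s*g^2/2. *)
  assert (Hstep : forall s, 0 < s -> s <= / (2 * M) -> 0 <= xs + s * g -> g = 0).
  { intros s Hs HsM Hx.
    pose proof (profit_gap_bounds (xs + s * g) xs Hx Hxs) as [_ Hup].
    pose proof (Hbr _ Hx). fold g M in Hup.
    replace (xs + s * g - xs) with (s * g) in Hup by ring.
    assert (Hsm : s * M <= / 2).
    { replace (/ 2) with (/ (2 * M) * M) by (field; lra). apply Rmult_le_compat_r; lra. }
    replace ((s * g) ^ 2 * M - g * (s * g)) with (s * g ^ 2 * (s * M - 1)) in Hup by ring.
    assert (Hg2 : s * g ^ 2 <= 0).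
    { apply Rnot_lt_le. intros Hlt.
      assert (s * g ^ 2 * (s * M - 1) < 0) by (apply Rmult_pos_neg; lra).
      lra. }
    assert (0 <= g ^ 2) by apply pow2_ge_0.
    assert (g ^ 2 = 0) by nra.
    destruct (Req_dec g 0) as [|Hg0]; [assumption|]. now apply (pow_nonzero g 2) in Hg0. }
  assert (Hg : g <= 0).
  { destruct (Rle_lt_dec g 0) as [|Hg]; [assumption|].
    assert (g = 0); [|lra].
    apply (Hstep (/ (2 * M))); [apply Rinv_0_lt_compat; lra|lra|].
    assert (0 < / (2 * M)) by (apply Rinv_0_lt_compat; lra). nra. }
  split; [assumption|].
  destruct (Req_dec xs 0) as [->|Hxs0]; [ring|].
  destruct (Req_dec g 0) as [->|Hg0]; [ring|].
  set (s := Rmin (/ (2 * M)) (xs / - g)).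
  assert (Hs : 0 < s).
  { apply Rmin_glb_lt; [apply Rinv_0_lt_compat|apply Rdiv_lt_0_compat]; lra. }
  assert (Hsx : s * - g <= xs).
  { assert (Hsr : s * - g <= xs / - g * - g) by (apply Rmult_le_compat_r; [lra|apply Rmin_r]).
    replace (xs / - g * - g) with xs in Hsr by (field; lra). assumption. }
  assert (g = 0); [|lra].
  apply (Hstep s); [assumption|apply Rmin_l|lra].
Qed.

Lemma best_response_iff xs : 0 <= xs ->
  (forall x, 0 <= x -> profit Rw gamma ci S x <= profit Rw gamma ci S xs) <->
  xs = (xs + S) * share Rw gamma ci (xs + S).
Proof.
  intros Hxs. set (T := xs + S).
  assert (HT : 0 < T) by (unfold T; lra).
  assert (HD : 0 < Rw + gamma * T ^ 2) by nra.
  set (y := (Rw - ci * T) / (Rw + gamma * T ^ 2)).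
  assert (Hmarg : marginal_profit Rw gamma ci S xs = (T * y - xs) * ((Rw + gamma * T ^ 2) / T ^ 2)).
  { unfold marginal_profit, y, T in *. field. split; lra. }
  assert (Hk : 0 < (Rw + gamma * T ^ 2) / T ^ 2) by (apply Rdiv_lt_0_compat; nra).
  unfold share. fold y. rewrite <- RmaxRmult, Rmult_0_r by lra.
  rewrite eq_Rmax0_iff by assumption. split.
  - intros Hbr. destruct (kkt_of_best_response xs Hxs Hbr) as [H1 H2].
    rewrite Hmarg in H1, H2. split; nra.
  - intros [H1 H2]. apply best_response_of_kkt; [assumption| |]; rewrite Hmarg; nra.
Qed.

End BestResponse.

Lemma profit_alone_improvable Rw gamma ci xs : 0 < Rw -> 0 <= gamma -> 0 < ci -> 0 <= xs ->
  exists x, 0 <= x /\ profit Rw gamma ci 0 xs < profit Rw gamma ci 0 x.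
Proof.
  intros HRw Hg Hc Hxs. unfold profit.
  destruct (Req_dec xs 0) as [->|Hxs0].
  - (* Idling earns the junk payoff 0 at total 0; a small positive rate earns almost Rw. *)
    set (x := Rw / (2 * ci + gamma + Rw)).
    assert (Hx : 0 < x < 1).
    { unfold x. split; [apply Rdiv_lt_0_compat; lra|].
      apply (Rmult_lt_reg_r (2 * ci + gamma + Rw)); [lra|]. field_simplify; lra. }
    assert (Hxr : x * (2 * ci + gamma + Rw) = Rw) by (unfold x; field; lra).
    exists x. split; [lra|].
    destruct (Req_EM_T (0 + 0) 0); [|lra]. destruct (Req_EM_T (x + 0) 0); [lra|].
    replace (x / (x + 0)) with 1 by (field; lra).
    assert (gamma * x ^ 2 <= gamma * x) by (apply Rmult_le_compat_l; nra).
    nra.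
  - exists (xs / 2). split; [lra|].
    destruct (Req_EM_T (xs + 0) 0); [lra|]. destruct (Req_EM_T (xs / 2 + 0) 0); [lra|].
    replace (xs / (xs + 0)) with 1 by (field; lra).
    replace (xs / 2 / (xs / 2 + 0)) with 1 by (field; lra).
    assert (0 < ci * xs) by nra. nra.
Qed.

Section Shares.

Variables Rw gamma : R.
Hypotheses (HRw : 0 < Rw) (Hgamma : 0 <= gamma).

Lemma share_nonneg ci T : 0 <= share Rw gamma ci T.
Proof. apply Rmax_l. Qed.

Lemma share_lt_1 ci T : 0 < ci -> 0 < T -> share Rw gamma ci T < 1.
Proof.
  intros Hc HT. apply Rmax_lub_lt; [lra|].
  assert (0 < Rw + gamma * T ^ 2) by nra.
  apply (Rmult_lt_reg_r (Rw + gamma * T ^ 2)); [lra|]. field_simplify; nra.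
Qed.

Lemma share_active ci T : 0 < T -> ci * T < Rw ->
  share Rw gamma ci T = (Rw - ci * T) / (Rw + gamma * T ^ 2).
Proof.
  intros HT Hc. apply Rmax_right, Rlt_le, Rdiv_lt_0_compat; nra.
Qed.

Lemma share_inactive ci T : Rw <= ci * T -> share Rw gamma ci T = 0.
Proof.
  intros Hc. apply Rmax_left.
  assert (0 < Rw + gamma * T ^ 2) by nra.
  apply (Rmult_le_reg_r (Rw + gamma * T ^ 2)); [lra|]. field_simplify; lra.
Qed.

Lemma share_decreasing ci T T' : 0 < ci -> 0 < T -> T < T' ->
  0 < share Rw gamma ci T' -> share Rw gamma ci T' < share Rw gamma ci T.
Proof.
  intros Hc HT HTT' Hpos.
  destruct (Rlt_le_dec (ci * T') Rw) as [Hact|Hinact];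
    [|rewrite share_inactive in Hpos by assumption; lra].
  rewrite !share_active by nra.
  assert (0 < Rw + gamma * T ^ 2) by nra.
  assert (0 < Rw + gamma * T' ^ 2) by nra.
  assert (gamma * T ^ 2 <= gamma * T' ^ 2) by (apply Rmult_le_compat_l; nra).
  apply Rle_lt_trans with ((Rw - ci * T') / (Rw + gamma * T ^ 2)); unfold Rdiv.
  - apply Rmult_le_compat_l; [lra|]. apply Rinv_le_contravar; lra.
  - apply Rmult_lt_compat_r; [apply Rinv_0_lt_compat|]; nra.
Qed.

Lemma share_sum_injective N (c : nat -> R) T T' :
  (forall i, (i < N)%nat -> 0 < c i) -> 0 < T -> 0 < T' ->
  sumN (fun i => share Rw gamma (c i) T) N = 1 ->
  sumN (fun i => share Rw gamma (c i) T') N = 1 -> T = T'.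
Proof.
  intros Hc HT HT' Hsum Hsum'.
  assert (Hlt : forall a b, 0 < a -> a < b ->
            0 < sumN (fun i => share Rw gamma (c i) b) N ->
            sumN (fun i => share Rw gamma (c i) b) N < sumN (fun i => share Rw gamma (c i) a) N).
  { intros a b Ha Hab Hb.
    destruct (sumN_pos_witness _ _ Hb) as [j [Hj Hpos]].
    apply (sumN_lt _ _ _ j); [|assumption|now apply share_decreasing; auto].
    intros i Hi. destruct (Req_dec (share Rw gamma (c i) b) 0) as [->|Hi0].
    - apply share_nonneg.
    - apply Rlt_le, share_decreasing; auto. pose proof (share_nonneg (c i) b). lra. }
  destruct (Rtotal_order T T') as [HTT'|[HTT'|HTT']]; [|assumption|].
  - pose proof (Hlt T T' HT HTT' ltac:(lra)). lra.
  - pose proof (Hlt T' T HT' HTT' ltac:(lra)). lra.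
Qed.

End Shares.

Section Equilibrium.

Variables (N : nat) (Rw gamma : R) (c : nat -> R).
Hypotheses (HRw : 0 < Rw) (Hgamma : 0 <= gamma) (Hc : forall i, (i < N)%nat -> 0 < c i).

Lemma equilibrium_others_pos h i : is_equilibrium N Rw gamma c h -> (i < N)%nat ->
  0 < sumN h N - h i.
Proof.
  intros [Hnn Hbr] Hi.
  assert (HS : 0 <= sumN h N - h i).
  { rewrite <- sumN_except by assumption. apply sumN_nonneg.
    intros j Hj. destruct (Nat.eq_dec j i); [lra|auto]. }
  destruct HS as [|HS0]; [assumption|exfalso].
  destruct (profit_alone_improvable Rw gamma (c i) (h i)) as [x [Hx Hgain]]; auto.
  pose proof (Hbr i Hi x Hx) as Hle. rewrite !payoff_eq_profit, <- HS0 in Hle by assumption.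
  lra.
Qed.

Lemma equilibrium_shares h i : is_equilibrium N Rw gamma c h -> (i < N)%nat ->
  h i = sumN h N * share Rw gamma (c i) (sumN h N).
Proof.
  intros Heq Hi. pose proof (equilibrium_others_pos h i Heq Hi) as HS.
  destruct Heq as [Hnn Hbr].
  replace (sumN h N) with (h i + (sumN h N - h i)) by ring.
  apply best_response_iff; auto.
  intros x Hx. rewrite <- !payoff_eq_profit by assumption. auto.
Qed.

Lemma equilibrium_of_shares h : 0 < sumN h N ->
  (forall i, (i < N)%nat -> h i = sumN h N * share Rw gamma (c i) (sumN h N)) ->
  is_equilibrium N Rw gamma c h.
Proof.
  intros HT Hh. split.
  - intros i Hi. rewrite Hh by assumption.
    apply Rmult_le_pos; [lra|apply share_nonneg].
  - intros i Hi x Hx. rewrite !payoff_eq_profit by assumption.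
    pose proof (Hh i Hi) as Hhi.
    pose proof (share_nonneg Rw gamma (c i) (sumN h N)).
    pose proof (share_lt_1 Rw gamma HRw Hgamma (c i) (sumN h N) (Hc i Hi) HT).
    assert (HS : 0 < sumN h N - h i) by (rewrite Hhi; nra).
    apply best_response_iff; auto; [nra|].
    now replace (h i + (sumN h N - h i)) with (sumN h N) by ring.
Qed.

Lemma equilibrium_share_sum h : (0 < N)%nat -> is_equilibrium N Rw gamma c h ->
  0 < sumN h N /\ sumN (fun i => share Rw gamma (c i) (sumN h N)) N = 1.
Proof.
  intros HN Heq.
  assert (HT : 0 < sumN h N).
  { pose proof (equilibrium_others_pos h 0 Heq HN).
    pose proof (proj1 Heq 0%nat HN). lra. }
  split; [assumption|].
  apply (Rmult_eq_reg_l (sumN h N)); [|lra].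
  rewrite <- sumN_scal_l, Rmult_1_r. symmetry.
  apply sumN_ext. intros i Hi. now apply equilibrium_shares.
Qed.

End Equilibrium.

Definition pos_root (a b d : R) : R :=
  if Rlt_dec 0 a then (sqrt (b ^ 2 + 4 * d * a) - b) / (2 * a) else d / b.

Lemma pos_root_spec a b d : 0 <= a -> 0 < b -> 0 < d ->
  0 < pos_root a b d /\ a * pos_root a b d ^ 2 + b * pos_root a b d = d.
Proof.
  intros Ha Hb Hd. unfold pos_root. destruct (Rlt_dec 0 a) as [Ha0|Ha0].
  - assert (Hdisc : 0 <= b ^ 2 + 4 * d * a) by nra.
    pose proof (sqrt_sqrt _ Hdisc) as Hsq.
    pose proof (sqrt_pos (b ^ 2 + 4 * d * a)).
    set (s := sqrt (b ^ 2 + 4 * d * a)) in *.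
    assert (Hsb : b < s) by nra.
    split; [apply Rdiv_lt_0_compat; lra|].
    field_simplify; [|lra]. replace (s ^ 2) with (s * s) by ring. rewrite Hsq. field. lra.
  - replace a with 0 by lra. split; [apply Rdiv_lt_0_compat; lra|]. field. lra.
Qed.

Lemma exists_maximal (P : nat -> Prop) m N : (forall k, P k \/ ~ P k) ->
  (m <= N)%nat -> P m ->
  exists n, (m <= n <= N)%nat /\ P n /\ ((n < N)%nat -> ~ P (S n)).
Proof.
  intros Pdec. induction N as [|N IH]; intros HmN HPm.
  - exists m. repeat split; auto; lia.
  - destruct (Nat.eq_dec m (S N)) as [->|HmSN].
    { exists (S N). repeat split; auto; lia. }
    destruct IH as [n [Hn [HPn Hnext]]]; [lia|assumption|].
    destruct (Pdec (S N)) as [HPSN|HPSN].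
    + exists (S N). repeat split; auto; lia.
    + exists n. repeat split; auto; try lia.
      intros HnSN. destruct (Nat.eq_dec n N) as [->|]; [assumption|]. apply Hnext. lia.
Qed.

(* The total at which the shares of exactly the miners 0, ..., k-1 sum to 1. *)
Definition aggregate_root (Rw gamma : R) (c : nat -> R) (k : nat) : R :=
  pos_root gamma (sumN c k) (INR (k - 1) * Rw).

Section Aggregate.

Variables (N : nat) (Rw gamma : R) (c : nat -> R).
Hypotheses (HRw : 0 < Rw) (Hgamma : 0 <= gamma) (Hc0 : 0 < c 0%nat)
  (Hmono : forall i j, (i <= j)%nat -> (j < N)%nat -> c i <= c j).

Lemma cost_pos i : (i < N)%nat -> 0 < c i.
Proof. intros Hi. assert (c 0%nat <= c i) by (apply Hmono; lia). lra. Qed.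

Lemma cost_sum_pos k : (1 <= k <= N)%nat -> 0 < sumN c k.
Proof.
  intros Hk. rewrite <- (sumN_zero k). apply (sumN_lt _ _ _ 0); [|lia|].
  - intros i Hi. apply Rlt_le, cost_pos. lia.
  - apply cost_pos. lia.
Qed.

Lemma aggregate_root_spec k : (2 <= k <= N)%nat ->
  0 < aggregate_root Rw gamma c k /\
  gamma * aggregate_root Rw gamma c k ^ 2 + sumN c k * aggregate_root Rw gamma c k
  = INR (k - 1) * Rw.
Proof.
  intros Hk. apply pos_root_spec; [assumption|apply cost_sum_pos; lia|].
  apply Rmult_lt_0_compat; [apply lt_0_INR; lia|assumption].
Qed.

Lemma aggregate_root_step k : (2 <= k < N)%nat ->
  c k * aggregate_root Rw gamma c k < Rw -> c k * aggregate_root Rw gamma c (S k) < Rw.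
Proof.
  intros Hk Hprof.
  destruct (aggregate_root_spec k) as [Hr Hroot]; [lia|].
  destruct (aggregate_root_spec (S k)) as [Hr' Hroot']; [lia|].
  set (r := aggregate_root Rw gamma c k) in *.
  set (r' := aggregate_root Rw gamma c (S k)) in *.
  simpl sumN in Hroot'.
  replace (S k - 1)%nat with (S (k - 1)) in Hroot' by lia. rewrite S_INR in Hroot'.
  assert (HC : 0 < sumN c k) by (apply cost_sum_pos; lia).
  pose proof (cost_pos k ltac:(lia)).
  destruct (Rlt_le_dec (c k * r') Rw) as [|Hunprof]; [assumption|exfalso].
  assert (Hr'r : r' <= r).
  { destruct (Rle_lt_dec r' r) as [|Hlt]; [assumption|].
    assert (gamma * r ^ 2 <= gamma * r' ^ 2) by (apply Rmult_le_compat_l; nra).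
    nra. }
  nra.
Qed.

Lemma aggregate_threshold : (2 <= N)%nat ->
  exists n, (2 <= n <= N)%nat /\
    (forall i, (i < n)%nat -> c i * aggregate_root Rw gamma c n < Rw) /\
    (forall i, (n <= i < N)%nat -> Rw <= c i * aggregate_root Rw gamma c n).
Proof.
  intros HN.
  set (P := fun k => c (k - 1)%nat * aggregate_root Rw gamma c k < Rw).
  assert (HP2 : P 2%nat).
  { destruct (aggregate_root_spec 2) as [Hr Hroot]; [lia|]. unfold P. simpl in *.
    pose proof (cost_pos 0 ltac:(lia)). nra. }
  destruct (exists_maximal P 2 N) as [n [Hn [HPn Hlast]]]; auto.
  { intros k. unfold P. destruct (Rlt_dec (c (k - 1)%nat * aggregate_root Rw gamma c k) Rw);
      [left|right]; assumption. }
  exists n. split; [assumption|split].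
  - intros i Hi. assert (c i <= c (n - 1)%nat) by (apply Hmono; lia).
    destruct (aggregate_root_spec n) as [Hr _]; [lia|]. unfold P in HPn. nra.
  - intros i Hi. assert (c n <= c i) by (apply Hmono; lia).
    destruct (aggregate_root_spec n) as [Hr _]; [lia|].
    assert (Rw <= c n * aggregate_root Rw gamma c n); [|nra].
    apply Rnot_lt_le. intros Hprof. apply (Hlast ltac:(lia)). unfold P.
    replace (S n - 1)%nat with n by lia. apply aggregate_root_step; [lia|assumption].
Qed.

Lemma aggregate_share_sum n : (2 <= n <= N)%nat ->
  (forall i, (i < n)%nat -> c i * aggregate_root Rw gamma c n < Rw) ->
  (forall i, (n <= i < N)%nat -> Rw <= c i * aggregate_root Rw gamma c n) ->
  sumN (fun i => share Rw gamma (c i) (aggregate_root Rw gamma c n)) N = 1.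
Proof.
  intros Hn Hact Hinact.
  destruct (aggregate_root_spec n) as [Hr Hroot]; [lia|].
  set (r := aggregate_root Rw gamma c n) in *.
  assert (HD : 0 < Rw + gamma * r ^ 2) by nra.
  rewrite (sumN_zero_tail _ n N) by (try lia; intros; apply share_inactive; auto; lia).
  rewrite (sumN_ext _ (fun i => Rw / (Rw + gamma * r ^ 2) + (- r / (Rw + gamma * r ^ 2)) * c i)).
  2: { intros i Hi. rewrite share_active by auto. field. lra. }
  rewrite sumN_affine.
  replace (INR n) with (INR (n - 1) + 1) by (rewrite minus_INR by lia; simpl; ring).
  transitivity ((INR (n - 1) * Rw + Rw - sumN c n * r) / (Rw + gamma * r ^ 2)); [field; lra|].
  rewrite <- Hroot. field. lra.
Qed.

End Aggregate.

Theorem proposition4p1 (N : nat) (Rw gamma : R) (c : nat -> R) :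
  (2 <= N)%nat ->
  0 < Rw -> 0 <= gamma ->
  0 < c 0%nat ->
  (forall i j, (i <= j)%nat -> (j < N)%nat -> c i <= c j) ->
  exists h : nat -> R,
    is_equilibrium N Rw gamma c h /\
    (forall h' : nat -> R, is_equilibrium N Rw gamma c h' ->
        forall i, (i < N)%nat -> h' i = h i) /\
    exists n : nat, (2 <= n)%nat /\ (n <= N)%nat /\
      let H := sumN h N in
      let cn := sumN c n in
      (forall i, (i < n)%nat -> h i = H * (Rw - c i * H) / (Rw + gamma * H ^ 2)) /\
      (forall i, (n <= i)%nat -> (i < N)%nat -> h i = 0) /\
      (0 < gamma -> H = (sqrt (cn ^ 2 + 4 * INR (n - 1) * Rw * gamma) - cn) / (2 * gamma)) /\
      (gamma = 0 -> H = INR (n - 1) * Rw / cn).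
Proof.
  intros HN HRw Hgamma Hc0 Hmono.
  pose proof (cost_pos N c Hc0 Hmono) as Hc.
  destruct (aggregate_threshold N Rw gamma c HRw Hgamma Hc0 Hmono HN) as [n [Hn [Hact Hinact]]].
  destruct (aggregate_root_spec N Rw gamma c HRw Hgamma Hc0 Hmono n Hn) as [HT _].
  pose proof (aggregate_share_sum N Rw gamma c HRw Hgamma Hc0 Hmono n Hn Hact Hinact) as Hsum1.
  set (T := aggregate_root Rw gamma c n) in *.
  set (h := fun i => T * share Rw gamma (c i) T).
  assert (Hsum : sumN h N = T) by (unfold h; rewrite sumN_scal_l, Hsum1; ring).
  exists h. split; [|split].
  - apply equilibrium_of_shares; auto; rewrite Hsum; [assumption|reflexivity].
  - intros h' Heq' i Hi.
    destruct (equilibrium_share_sum N Rw gamma c HRw Hgamma Hc h' ltac:(lia) Heq') as [HT' Hsum'].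
    rewrite (equilibrium_shares N Rw gamma c HRw Hgamma Hc h' i Heq' Hi).
    now rewrite (share_sum_injective Rw gamma HRw Hgamma N c _ T Hc HT' HT Hsum' Hsum1).
  - exists n. split; [lia|split; [lia|]]. cbv zeta. rewrite Hsum.
    split; [|split; [|split]]; unfold h.
    + intros i Hi. rewrite share_active by auto. unfold Rdiv. ring.
    + intros i Hi HiN. rewrite share_inactive by auto. ring.
    + intros Hg. unfold T, aggregate_root, pos_root.
      destruct (Rlt_dec 0 gamma); [|lra].
      now replace (4 * (INR (n - 1) * Rw) * gamma) with (4 * INR (n - 1) * Rw * gamma) by ring.
    + intros Hg. unfold T, aggregate_root, pos_root.
      destruct (Rlt_dec 0 gamma); [lra|reflexivity].
Qed.
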